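(* Let $a<b$ and $c<d$ be real numbers, and let $f:[a,b]\times[c,d]\to\mathbb{R}$ be a continuous function whose first partial derivatives $D_1 f, D_2 f$ and mixed second partial derivative $D_2D_1 f$ exist and are continuous on $[a,b]\times[c,d]$. Then \begin{align*} &\int_a^b\int_c^d f(t,s)\,ds\,dt-\frac12\Big[(d-c)\int_a^b\big[f(t,c)+f(t,d)\big]\,dt+(b-a)\int_c^d\big[f(a,s)+f(b,s)\big]\,ds\Big]\\ &\quad+\frac14(b-a)(d-c)\big[f(a,c)+f(a,d)+f(b,c)+f(b,d)\big] \le \frac14(b-a)(d-c)\int_a^b\int_c^d |D_2D_1 f(t,s)|\,ds\,dt . \end{align*}
   Context: $D_1$ and $D_2$ denote partial differentiation with respect to the first and second variable respectively, so $D_2D_1 f=\frac{\partial}{\partial s}\frac{\partial f}{\partial t}$. *)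

From Stdlib Require Import Reals.
From Coquelicot Require Import Coquelicot.
Open Scope R_scope.

Definition in_rect (a b c d : R) (p : R * R) : Prop :=
  a <= fst p <= b /\ c <= snd p <= d.

Definition cont_on_rect (a b c d : R) (g : R -> R -> R) : Prop :=
  forall t s, in_rect a b c d (t, s) ->
    filterlim (fun p : R * R => g (fst p) (snd p))
      (within (in_rect a b c d) (locally (t, s))) (locally (g t s)).

(* h has derivative l at x relative to the closed interval [lo,hi]
   (one-sided at the endpoints): the difference quotient tends to l as
   y -> x with y <> x, y in [lo,hi]. *)
Definition deriv_within (lo hi : R) (h : R -> R) (x l : R) : Prop :=
  filterlim (fun y => (h y - h x) / (y - x))
    (within (fun y => y <> x /\ lo <= y <= hi) (locally x)) (locally l).

From Stdlib Require Import Reals Lra.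
From Coquelicot Require Import Coquelicot.
Open Scope R_scope.

(* Integrating by parts,
   [trap_err lo hi h = RInt (fun x => (x - (lo + hi) / 2) * h' x) lo hi].
   The left-hand side of the inequality is the trapezoid error in [t] of the
   trapezoid error in [s] of [f].  Differentiating under the integral sign,
   the derivative in [t] of [trap_err c d (f t)] is [trap_err c d (D1f t)], so
   two integrations by parts turn the left-hand side into
   [RInt (RInt ((t - (a + b) / 2) * (s - (c + d) / 2) * D21f t s))], and the
   kernels are bounded by [(b - a) / 2] and [(d - c) / 2]. *)

Definition clamp (lo hi x : R) : R := Rmax lo (Rmin hi x).

Lemma clamp_id lo hi x : lo <= x <= hi -> clamp lo hi x = x.
Proof. intros Hx; unfold clamp, Rmax, Rmin; repeat destruct Rle_dec; lra. Qed.

Lemma clamp_in lo hi x : lo <= hi -> lo <= clamp lo hi x <= hi.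
Proof. intros Hlh; unfold clamp, Rmax, Rmin; repeat destruct Rle_dec; lra. Qed.

Lemma clamp_lipschitz lo hi x y :
  Rabs (clamp lo hi x - clamp lo hi y) <= Rabs (x - y).
Proof.
  unfold clamp, Rmax, Rmin; repeat destruct Rle_dec;
    unfold Rabs; repeat destruct Rcase_abs; lra.
Qed.

(* Continuity of [h] on [lo, hi] in the relative topology, encoded as
   continuity everywhere of its extension [h o clamp lo hi] by constants. *)
Definition cont_on_seg (lo hi : R) (h : R -> R) : Prop :=
  forall x, continuity_pt (fun y => h (clamp lo hi y)) x.

Lemma cont_on_seg_intro lo hi h : lo <= hi ->
  (forall x, lo <= x <= hi -> forall eps, 0 < eps -> exists del, 0 < del /\
     forall y, lo <= y <= hi -> Rabs (y - x) < del -> Rabs (h y - h x) < eps) ->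
  cont_on_seg lo hi h.
Proof.
  intros Hlh Hh x eps Heps.
  destruct (Hh (clamp lo hi x) (clamp_in lo hi x Hlh) eps Heps) as [del [Hdel Hy]].
  exists del; split; [exact Hdel|].
  intros y [_ Hyx]; simpl in *; unfold R_dist in *.
  apply Hy; [apply clamp_in, Hlh|].
  eapply Rle_lt_trans; [apply clamp_lipschitz | exact Hyx].
Qed.

Lemma ex_RInt_cont_on_seg lo hi h : lo <= hi -> cont_on_seg lo hi h -> ex_RInt h lo hi.
Proof.
  intros Hlh Hh.
  apply ex_RInt_ext with (fun y => h (clamp lo hi y)).
  - intros x Hx; rewrite Rmin_left, Rmax_right in Hx by lra.
    rewrite clamp_id; lra.
  - apply (@ex_RInt_continuous R_CompleteNormedModule); intros z _.
    apply continuity_pt_filterlim, Hh.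
Qed.

Lemma cont_on_seg_const lo hi k : cont_on_seg lo hi (fun _ => k).
Proof. intros x; apply continuity_pt_const; intros u v; reflexivity. Qed.

Lemma cont_on_seg_id lo hi : cont_on_seg lo hi (fun x => x).
Proof.
  intros x eps Heps; exists eps; split; [exact Heps|].
  intros y [_ Hyx]; simpl in *; unfold R_dist in *.
  eapply Rle_lt_trans; [apply clamp_lipschitz | exact Hyx].
Qed.

Lemma cont_on_seg_plus lo hi g h :
  cont_on_seg lo hi g -> cont_on_seg lo hi h -> cont_on_seg lo hi (fun x => g x + h x).
Proof. intros Hg Hh x; exact (continuity_pt_plus _ _ x (Hg x) (Hh x)). Qed.

Lemma cont_on_seg_minus lo hi g h :
  cont_on_seg lo hi g -> cont_on_seg lo hi h -> cont_on_seg lo hi (fun x => g x - h x).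
Proof. intros Hg Hh x; exact (continuity_pt_minus _ _ x (Hg x) (Hh x)). Qed.

Lemma cont_on_seg_mult lo hi g h :
  cont_on_seg lo hi g -> cont_on_seg lo hi h -> cont_on_seg lo hi (fun x => g x * h x).
Proof. intros Hg Hh x; exact (continuity_pt_mult _ _ x (Hg x) (Hh x)). Qed.

Lemma cont_on_seg_abs lo hi h : cont_on_seg lo hi h -> cont_on_seg lo hi (fun x => Rabs (h x)).
Proof.
  intros Hh x; apply (continuity_pt_comp (fun y => h (clamp lo hi y)) Rabs);
    [apply Hh | apply Rcontinuity_abs].
Qed.

Create HintDb cont_on_seg.
#[local] Hint Resolve cont_on_seg_const cont_on_seg_id cont_on_seg_plus cont_on_seg_minus
  cont_on_seg_mult cont_on_seg_abs : cont_on_seg.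

Lemma deriv_within_is_derive lo hi h x l :
  lo < x < hi -> deriv_within lo hi h x l -> is_derive h x l.
Proof.
  intros Hx Hh; apply is_derive_Reals; intros eps Heps.
  assert (Hnear : locally x (fun y => y <> x -> Rabs ((h y - h x) / (y - x) - l) < eps)).
  { eapply filter_imp; [| apply filter_and;
      [apply (Hh _ (locally_ball l (mkposreal eps Heps)))
      | apply (locally_interval _ x lo hi); simpl; try lra;
        intros y Hlo Hhi; exact (conj Hlo Hhi)]].
    intros y [Hball Hy] Hyx; apply Hball; split; [exact Hyx | lra]. }
  destruct Hnear as [del Hdel]; exists del; intros k Hk0 Hk.
  specialize (Hdel (x + k)); replace (x + k - x) with k in Hdel by ring.
  apply Hdel; [| intros Hxk; apply Hk0; lra].
  change (Rabs (x + k - x) < del); now replace (x + k - x) with k by ring.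
Qed.

Lemma is_derive_clamp lo hi (P : R -> R) x l :
  lo < x < hi -> is_derive P x l -> is_derive (fun y => P (clamp lo hi y)) x l.
Proof.
  intros Hx HP; apply is_derive_ext_loc with (2 := HP).
  apply (locally_interval _ x lo hi); simpl; try lra.
  intros y Hlo Hhi; rewrite clamp_id; lra.
Qed.

Lemma is_RInt_derive_seg lo hi P k : lo < hi ->
  cont_on_seg lo hi P -> cont_on_seg lo hi k ->
  (forall x, lo < x < hi -> is_derive P x (k x)) ->
  is_RInt k lo hi (P hi - P lo).
Proof.
  intros Hlh HP Hk HPk.
  set (K := fun y => k (clamp lo hi y)).
  assert (K_cont : forall x, continuous K x) by (intros x; apply continuity_pt_filterlim, Hk).
  assert (K_int : forall x y, ex_RInt K x y)
    by (intros x y; apply (@ex_RInt_continuous R_CompleteNormedModule); intros; apply K_cont).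
  set (IK := fun x => RInt K lo x).
  assert (IK_derive : forall x, is_derive IK x (K x)).
  { intros x; apply (is_derive_RInt K IK lo x); [| apply K_cont].
    apply filter_forall; intros y; exact (RInt_correct K lo y (K_int lo y)). }
  (* [IK - P o clamp] has zero derivative on ]lo, hi[, hence is constant there. *)
  destruct (MVT_gen (fun x => IK x - P (clamp lo hi x)) lo hi (fun _ => 0)) as [z [_ Hz]].
  - rewrite Rmin_left, Rmax_right by lra; intros x Hx.
    replace 0 with (K x - k x) by (unfold K; rewrite clamp_id; lra).
    apply (is_derive_minus IK); [apply IK_derive | apply is_derive_clamp, HPk; exact Hx].
  - intros x _; apply continuity_pt_minus; [| apply HP].
    apply continuity_pt_filterlim.
    exact (ex_derive_continuous (V := R_NormedModule) IK x (ex_intro _ _ (IK_derive x))).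
  - rewrite Rmult_0_l, !clamp_id in Hz by lra.
    unfold IK in Hz; rewrite RInt_point in Hz.
    apply is_RInt_ext with K.
    + intros x Hx; rewrite Rmin_left, Rmax_right in Hx by lra.
      unfold K; rewrite clamp_id; lra.
    + replace (P hi - P lo) with (RInt K lo hi) by (revert Hz; unfold zero; simpl; lra).
      exact (RInt_correct K lo hi (K_int lo hi)).
Qed.

Definition trap_err (lo hi : R) (h : R -> R) : R :=
  (hi - lo) / 2 * (h lo + h hi) - RInt h lo hi.

Lemma is_RInt_trap_err lo hi h dh : lo < hi ->
  cont_on_seg lo hi h -> cont_on_seg lo hi dh ->
  (forall x, lo < x < hi -> is_derive h x (dh x)) ->
  is_RInt (fun x => (x - (lo + hi) / 2) * dh x) lo hi (trap_err lo hi h).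
Proof.
  intros Hlh Hh Hdh Hhdh.
  set (m := (lo + hi) / 2).
  assert (Hprod : is_RInt (fun x => h x + (x - m) * dh x) lo hi
                    ((hi - m) * h hi - (lo - m) * h lo)).
  { apply (is_RInt_derive_seg lo hi (fun x => (x - m) * h x));
      [exact Hlh | auto with cont_on_seg .. |].
    intros x Hx; apply is_derive_Reals.
    replace (h x + (x - m) * dh x) with ((1 - 0) * h x + (x - m) * dh x) by ring.
    apply (derivable_pt_lim_mult (fun y => y - m) h); [| apply is_derive_Reals, Hhdh, Hx].
    apply derivable_pt_lim_minus; [apply derivable_pt_lim_id | apply derivable_pt_lim_const]. }
  assert (Hint := RInt_correct h lo hi (ex_RInt_cont_on_seg lo hi h ltac:(lra) Hh)).
  replace (trap_err lo hi h) with (minus ((hi - m) * h hi - (lo - m) * h lo) (RInt h lo hi))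
    by (unfold trap_err, minus, plus, opp, m; simpl; field).
  apply is_RInt_ext with (2 := is_RInt_minus _ _ _ _ _ _ Hprod Hint).
  intros x _; unfold minus, plus, opp; simpl; ring.
Qed.

Lemma abs_RInt_centered_le lo hi g : lo <= hi -> cont_on_seg lo hi g ->
  Rabs (RInt (fun x => (x - (lo + hi) / 2) * g x) lo hi)
    <= (hi - lo) / 2 * RInt (fun x => Rabs (g x)) lo hi.
Proof.
  intros Hlh Hg.
  assert (Habs : ex_RInt (fun x => Rabs (g x)) lo hi)
    by (apply ex_RInt_cont_on_seg; auto with cont_on_seg).
  eapply Rle_trans;
    [apply abs_RInt_le; [exact Hlh | apply ex_RInt_cont_on_seg; auto with cont_on_seg] |].
  replace ((hi - lo) / 2 * RInt (fun x => Rabs (g x)) lo hi)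
    with (RInt (fun x => (hi - lo) / 2 * Rabs (g x)) lo hi)
    by exact (RInt_scal (fun x => Rabs (g x)) lo hi ((hi - lo) / 2) Habs).
  apply RInt_le; [exact Hlh | apply ex_RInt_cont_on_seg; auto with cont_on_seg .. |].
  intros x Hx; rewrite Rabs_mult; apply Rmult_le_compat_r; [apply Rabs_pos|].
  unfold Rabs; destruct Rcase_abs; lra.
Qed.

Lemma mvt_diff_quotient lo hi h dh x y :
  (forall z, lo < z < hi -> is_derive h z (dh z)) ->
  lo < x < hi -> lo < y < hi -> y <> x ->
  exists z, lo < z < hi /\ Rabs (z - x) <= Rabs (y - x) /\ (h y - h x) / (y - x) = dh z.
Proof.
  intros Hhdh Hx Hy Hyx.
  destruct (MVT_gen h x y dh) as [z [Hz Hmvt]].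
  - intros z Hz; apply Hhdh.
    revert Hz; unfold Rmin, Rmax; destruct Rle_dec; lra.
  - intros z Hz; apply continuity_pt_filterlim.
    apply (ex_derive_continuous (V := R_NormedModule) h z); eexists; apply Hhdh.
    revert Hz; unfold Rmin, Rmax; destruct Rle_dec; lra.
  - exists z; revert Hz; unfold Rmin, Rmax; destruct Rle_dec; intros Hz;
      (split; [lra | split; [unfold Rabs; repeat destruct Rcase_abs; lra |]]);
      rewrite Hmvt; field; lra.
Qed.

Lemma abs_RInt_lt lo hi g eps : lo <= hi -> ex_RInt g lo hi ->
  (forall x, lo <= x <= hi -> Rabs (g x) <= eps / (hi - lo + 1)) -> 0 < eps ->
  Rabs (RInt g lo hi) < eps.
Proof.
  intros Hlh Hg Hsmall Heps.
  eapply Rle_lt_trans; [apply abs_RInt_le_const; eauto |].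
  apply Rlt_le_trans with ((hi - lo + 1) * (eps / (hi - lo + 1))); [| right; field; lra].
  apply Rmult_lt_compat_r; [apply Rdiv_lt_0_compat|]; lra.
Qed.

Lemma is_RInt_diff_quotient g1 g0 g lo hi k :
  ex_RInt g1 lo hi -> ex_RInt g0 lo hi -> ex_RInt g lo hi -> k <> 0 ->
  is_RInt (fun s => (g1 s - g0 s) / k - g s) lo hi
    ((RInt g1 lo hi - RInt g0 lo hi) / k - RInt g lo hi).
Proof.
  intros H1 H0 H Hk.
  assert (Hq := is_RInt_minus _ _ _ _ _ _
    (is_RInt_scal _ _ _ (/ k) _
       (is_RInt_minus _ _ _ _ _ _ (RInt_correct _ _ _ H1) (RInt_correct _ _ _ H0)))
    (RInt_correct _ _ _ H)).
  unfold minus, plus, opp, scal in Hq; simpl in Hq; unfold mult in Hq; simpl in Hq.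
  replace ((RInt g1 lo hi - RInt g0 lo hi) / k - RInt g lo hi)
    with (/ k * (RInt g1 lo hi + - RInt g0 lo hi) + - RInt g lo hi) by (field; exact Hk).
  apply is_RInt_ext with (2 := Hq); intros x _.
  change (/ k * (g1 x + - g0 x) + - g x = (g1 x - g0 x) / k - g x); field; exact Hk.
Qed.

Definition unif_cont_rect (a b c d : R) (g : R -> R -> R) : Prop :=
  forall eps, 0 < eps -> exists del, 0 < del /\
  forall x y u v, a <= x <= b -> c <= y <= d -> a <= u <= b -> c <= v <= d ->
    Rabs (u - x) < del -> Rabs (v - y) < del -> Rabs (g u v - g x y) < eps.

Lemma unif_cont_rect_of_cont a b c d g : a <= b -> c <= d ->
  cont_on_rect a b c d g -> unif_cont_rect a b c d g.
Proof.
  intros Hab Hcd Hg.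
  set (G := fun t s => g (clamp a b t) (clamp c d s)).
  assert (G_cont : forall x y, continuity_2d_pt G x y).
  { intros x y eps.
    assert (Hin : in_rect a b c d (clamp a b x, clamp c d y))
      by (split; simpl; apply clamp_in; assumption).
    destruct (Hg _ _ Hin _ (locally_ball (g (clamp a b x) (clamp c d y)) eps)) as [del Hdel].
    exists del; intros u v Hu Hv; apply (Hdel (clamp a b u, clamp c d v)).
    - split; simpl; eapply Rle_lt_trans; try apply clamp_lipschitz; assumption.
    - split; simpl; apply clamp_in; assumption. }
  intros eps Heps.
  destruct (uniform_continuity_2d G a b c d (fun x y _ _ => G_cont x y) (mkposreal eps Heps))
    as [del Hdel].
  exists del; split; [apply cond_pos|].
  intros x y u v Hx Hy Hu Hv Hux Hvy.
  specialize (Hdel x y u v Hx Hy Hu Hv Hux Hvy); unfold G in Hdel.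
  rewrite !clamp_id in Hdel by assumption; exact Hdel.
Qed.

Section UniformlyContinuous.

Variables (a b c d : R) (g : R -> R -> R).
Hypothesis g_unif : unif_cont_rect a b c d g.

Lemma cont_on_seg_section_snd t : c <= d -> a <= t <= b -> cont_on_seg c d (g t).
Proof.
  intros Hcd Ht; apply cont_on_seg_intro; [exact Hcd|]; intros s Hs eps Heps.
  destruct (g_unif eps Heps) as [del [Hdel Hg]]; exists del; split; [exact Hdel|].
  intros v Hv Hvs; apply Hg; auto; rewrite Rminus_diag, Rabs_R0; exact Hdel.
Qed.

Lemma cont_on_seg_section_fst s : a <= b -> c <= s <= d -> cont_on_seg a b (fun t => g t s).
Proof.
  intros Hab Hs; apply cont_on_seg_intro; [exact Hab|]; intros t Ht eps Heps.
  destruct (g_unif eps Heps) as [del [Hdel Hg]]; exists del; split; [exact Hdel|].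
  intros u Hu Hut; apply Hg; auto; rewrite Rminus_diag, Rabs_R0; exact Hdel.
Qed.

Lemma unif_cont_rect_abs : unif_cont_rect a b c d (fun t s => Rabs (g t s)).
Proof.
  intros eps Heps; destruct (g_unif eps Heps) as [del [Hdel Hg]].
  exists del; split; [exact Hdel|]; intros.
  eapply Rle_lt_trans; [apply Rabs_triang_inv2 | apply Hg; assumption].
Qed.

Lemma cont_on_seg_RInt_param : a <= b -> c < d -> cont_on_seg a b (fun t => RInt (g t) c d).
Proof.
  intros Hab Hcd; apply cont_on_seg_intro; [exact Hab|]; intros t Ht eps Heps.
  destruct (g_unif (eps / (d - c + 1))) as [del [Hdel Hg]]; [apply Rdiv_lt_0_compat; lra|].
  exists del; split; [exact Hdel|]; intros u Hu Hut.
  assert (Hint : forall x, a <= x <= b -> ex_RInt (g x) c d)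
    by (intros x Hx; apply ex_RInt_cont_on_seg, cont_on_seg_section_snd; lra).
  replace (RInt (g u) c d - RInt (g t) c d) with (RInt (fun s => g u s - g t s) c d)
    by exact (RInt_minus (g u) (g t) c d (Hint u Hu) (Hint t Ht)).
  apply abs_RInt_lt; [lra | exact (ex_RInt_minus _ _ c d (Hint u Hu) (Hint t Ht)) | | exact Heps].
  intros s Hs; left; apply Hg; auto; rewrite Rminus_diag, Rabs_R0; exact Hdel.
Qed.

Lemma cont_on_seg_trap_err_param : a <= b -> c < d ->
  cont_on_seg a b (fun t => trap_err c d (g t)).
Proof.
  intros Hab Hcd; unfold trap_err.
  apply cont_on_seg_minus; [| apply cont_on_seg_RInt_param; assumption].
  apply cont_on_seg_mult; [apply cont_on_seg_const|].
  apply cont_on_seg_plus; apply cont_on_seg_section_fst; lra.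
Qed.

End UniformlyContinuous.

Lemma is_derive_RInt_param_interior a b c d g dg t : c < d ->
  unif_cont_rect a b c d dg ->
  (forall u s, a < u < b -> c <= s <= d -> is_derive (fun x => g x s) u (dg u s)) ->
  (forall u, a < u < b -> ex_RInt (g u) c d) ->
  a < t < b ->
  is_derive (fun u => RInt (g u) c d) t (RInt (dg t) c d).
Proof.
  intros Hcd dg_unif Hgdg g_int Ht.
  apply is_derive_Reals; intros eps Heps.
  destruct (dg_unif (eps / (d - c + 1))) as [del [Hdel Hdg]]; [apply Rdiv_lt_0_compat; lra|].
  assert (Hr : 0 < Rmin del (Rmin (t - a) (b - t))) by (repeat apply Rmin_pos; lra).
  exists (mkposreal _ Hr); simpl; intros k Hk0 Hk.
  assert (Htk : a < t + k < b /\ Rabs k < del)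
    by (revert Hk; unfold Rmin; repeat destruct Rle_dec; unfold Rabs; destruct Rcase_abs; lra).
  assert (dg_int : ex_RInt (dg t) c d)
    by (apply ex_RInt_cont_on_seg, (cont_on_seg_section_snd a b c d _ dg_unif); lra).
  assert (Hq := is_RInt_diff_quotient (g (t + k)) (g t) (dg t) c d k
    (g_int _ (proj1 Htk)) (g_int t Ht) dg_int Hk0).
  replace (t + k - t) with k by ring; rewrite <- (is_RInt_unique _ _ _ _ Hq).
  apply abs_RInt_lt; [lra | eexists; exact Hq | | exact Heps].
  intros s Hs.
  destruct (mvt_diff_quotient a b (fun x => g x s) (fun x => dg x s) t (t + k))
    as [z [Hz [Hzt Hmvt]]]; [intros z Hz; apply Hgdg; assumption | lra .. |].
  replace (t + k - t) with k in Hmvt, Hzt by ring.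
  rewrite Hmvt; left; apply Hdg; try lra.
  rewrite Rminus_diag, Rabs_R0; exact Hdel.
Qed.

Section MixedDerivative.

Variables (a b c d : R) (f D1f D21f : R -> R -> R).
Hypotheses (Hab : a < b) (Hcd : c < d).
Hypothesis f_unif : unif_cont_rect a b c d f.
Hypothesis D1f_unif : unif_cont_rect a b c d D1f.
Hypothesis D21f_unif : unif_cont_rect a b c d D21f.
Hypothesis f_D1 : forall t s, in_rect a b c d (t, s) ->
  deriv_within a b (fun u => f u s) t (D1f t s).
Hypothesis D1f_D2 : forall t s, in_rect a b c d (t, s) ->
  deriv_within c d (fun v => D1f t v) s (D21f t s).

Lemma double_trap_err_expand :
  RInt (fun t => RInt (fun s => f t s) c d) a b
  - / 2 * ((d - c) * RInt (fun t => f t c + f t d) a b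
           + (b - a) * RInt (fun s => f a s + f b s) c d)
  + / 4 * (b - a) * (d - c) * (f a c + f a d + f b c + f b d)
  = trap_err a b (fun t => trap_err c d (f t)).
Proof.
  assert (section_int : forall t, a <= t <= b -> ex_RInt (f t) c d)
    by (intros t Ht; apply ex_RInt_cont_on_seg, (cont_on_seg_section_snd a b c d _ f_unif); lra).
  assert (edges_int : ex_RInt (fun t => f t c + f t d) a b).
  { apply ex_RInt_cont_on_seg; [lra|].
    apply cont_on_seg_plus; apply (cont_on_seg_section_fst a b c d _ f_unif); lra. }
  assert (inner_int : ex_RInt (fun t => RInt (fun s => f t s) c d) a b)
    by (apply ex_RInt_cont_on_seg, (cont_on_seg_RInt_param a b c d _ f_unif); lra).
  assert (RInt_edges : RInt (fun s => f a s + f b s) c d = RInt (f a) c d + RInt (f b) c d)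
    by exact (RInt_plus (f a) (f b) c d (section_int a ltac:(lra)) (section_int b ltac:(lra))).
  assert (RInt_trap_err : RInt (fun t => trap_err c d (f t)) a b
    = (d - c) / 2 * RInt (fun t => f t c + f t d) a b
      - RInt (fun t => RInt (fun s => f t s) c d) a b).
  { apply is_RInt_unique.
    exact (is_RInt_minus _ _ _ _ _ _
      (is_RInt_scal _ _ _ ((d - c) / 2) _ (RInt_correct _ _ _ edges_int))
      (RInt_correct _ _ _ inner_int)). }
  unfold trap_err at 1; rewrite RInt_trap_err, RInt_edges; unfold trap_err; field.
Qed.

Lemma trap_err_D1f_eq t : a <= t <= b ->
  trap_err c d (D1f t) = RInt (fun s => (s - (c + d) / 2) * D21f t s) c d.
Proof.
  intros Ht; symmetry; apply is_RInt_unique, is_RInt_trap_err;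
    [lra | apply (cont_on_seg_section_snd a b c d _ D1f_unif)
         | apply (cont_on_seg_section_snd a b c d _ D21f_unif) |]; try lra.
  intros s Hs; apply (deriv_within_is_derive c d); [lra|].
  apply D1f_D2; split; simpl; lra.
Qed.

Lemma is_derive_trap_err t : a < t < b ->
  is_derive (fun u => trap_err c d (f u)) t (trap_err c d (D1f t)).
Proof.
  intros Ht; unfold trap_err.
  assert (f_derive : forall s, c <= s <= d -> is_derive (fun u => f u s) t (D1f t s)).
  { intros s Hs; apply (deriv_within_is_derive a b); [lra|].
    apply f_D1; split; simpl; lra. }
  apply is_derive_Reals.
  apply (derivable_pt_lim_minus (fun u => (d - c) / 2 * (f u c + f u d))
                                (fun u => RInt (f u) c d)).
  - apply (derivable_pt_lim_scal (fun u => f u c + f u d)).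
    apply (derivable_pt_lim_plus (fun u => f u c) (fun u => f u d));
      apply is_derive_Reals, f_derive; lra.
  - apply is_derive_Reals, (is_derive_RInt_param_interior a b); auto.
    + intros u s Hu Hs; apply (deriv_within_is_derive a b); [lra|].
      apply f_D1; split; simpl; lra.
    + intros u Hu; apply ex_RInt_cont_on_seg, (cont_on_seg_section_snd a b c d _ f_unif); lra.
Qed.

Lemma double_trap_err_eq_RInt :
  trap_err a b (fun t => trap_err c d (f t))
    = RInt (fun t => (t - (a + b) / 2) * trap_err c d (D1f t)) a b.
Proof.
  symmetry; apply is_RInt_unique, is_RInt_trap_err;
    [lra | apply (cont_on_seg_trap_err_param a b c d _ f_unif)
         | apply (cont_on_seg_trap_err_param a b c d _ D1f_unif) | exact is_derive_trap_err]; lra.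
Qed.

Lemma abs_trap_err_D1f_le t : a <= t <= b ->
  Rabs (trap_err c d (D1f t)) <= (d - c) / 2 * RInt (fun s => Rabs (D21f t s)) c d.
Proof.
  intros Ht; rewrite trap_err_D1f_eq by exact Ht.
  apply abs_RInt_centered_le; [lra | apply (cont_on_seg_section_snd a b c d _ D21f_unif); lra].
Qed.

Lemma abs_double_trap_err_le :
  Rabs (trap_err a b (fun t => trap_err c d (f t)))
    <= / 4 * (b - a) * (d - c) * RInt (fun t => RInt (fun s => Rabs (D21f t s)) c d) a b.
Proof.
  set (J := fun t => RInt (fun s => Rabs (D21f t s)) c d).
  assert (J_cont : cont_on_seg a b J).
  { apply (cont_on_seg_RInt_param a b c d (fun t s => Rabs (D21f t s)));
      [apply unif_cont_rect_abs, D21f_unif | lra ..]. }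
  assert (J_int : ex_RInt J a b) by (apply ex_RInt_cont_on_seg; [lra | exact J_cont]).
  assert (E_cont : cont_on_seg a b (fun t => trap_err c d (D1f t)))
    by (apply (cont_on_seg_trap_err_param a b c d _ D1f_unif); lra).
  rewrite double_trap_err_eq_RInt.
  eapply Rle_trans; [apply abs_RInt_centered_le; [lra | exact E_cont] |].
  replace (/ 4 * (b - a) * (d - c) * RInt J a b)
    with ((b - a) / 2 * RInt (fun t => (d - c) / 2 * J t) a b).
  2: { replace (RInt (fun t => (d - c) / 2 * J t) a b) with ((d - c) / 2 * RInt J a b)
         by (symmetry; exact (RInt_scal J a b ((d - c) / 2) J_int)).
       field. }
  apply Rmult_le_compat_l; [lra|].
  apply RInt_le; [lra | apply ex_RInt_cont_on_seg; auto with cont_on_seg; lra .. |].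
  intros t Ht; apply abs_trap_err_D1f_le; lra.
Qed.

End MixedDerivative.

Theorem corollary3p1 (a b c d : R) (f D1f D2f D21f : R -> R -> R) :
  a < b -> c < d ->
  cont_on_rect a b c d f ->
  (forall t s, in_rect a b c d (t, s) ->
     deriv_within a b (fun u => f u s) t (D1f t s)) ->
  (forall t s, in_rect a b c d (t, s) ->
     deriv_within c d (fun v => f t v) s (D2f t s)) ->
  (forall t s, in_rect a b c d (t, s) ->
     deriv_within c d (fun v => D1f t v) s (D21f t s)) ->
  cont_on_rect a b c d D1f ->
  cont_on_rect a b c d D2f ->
  cont_on_rect a b c d D21f ->
  RInt (fun t => RInt (fun s => f t s) c d) a b
  - / 2 * ((d - c) * RInt (fun t => f t c + f t d) a b
           + (b - a) * RInt (fun s => f a s + f b s) c d)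
  + / 4 * (b - a) * (d - c) * (f a c + f a d + f b c + f b d)
  <= / 4 * (b - a) * (d - c)
       * RInt (fun t => RInt (fun s => Rabs (D21f t s)) c d) a b.
Proof.
  intros Hab Hcd f_cont f_D1 _ D1f_D2 D1f_cont _ D21f_cont.
  assert (f_unif := unif_cont_rect_of_cont a b c d f ltac:(lra) ltac:(lra) f_cont).
  assert (D1f_unif := unif_cont_rect_of_cont a b c d D1f ltac:(lra) ltac:(lra) D1f_cont).
  assert (D21f_unif := unif_cont_rect_of_cont a b c d D21f ltac:(lra) ltac:(lra) D21f_cont).
  rewrite (double_trap_err_expand a b c d f Hab Hcd f_unif).
  eapply Rle_trans; [apply Rle_abs |].
  exact (abs_double_trap_err_le a b c d f D1f D21f Hab Hcd f_unif D1f_unif D21f_unif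
           f_D1 D1f_D2).
Qed.
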